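(* Let $X\sim p^{\mathbb{Z}^d}$, $Y\sim q^{\mathbb{Z}^d}$ be i.i.d. processes over finite alphabets and let $\phi:X\to Y$ be a finitary homomorphism with $\mathbf{E}[R_\phi^{d/2}]<\infty$. Then there is a sequence $\delta_N\searrow0$ such that \[\mathbf{E}[|\mathcal{J}^c_{N,\lfloor\delta_N N\rfloor}|]=o(N^{d/2})\quad(N\to\infty).\]
   Context: A homomorphism $\phi:X\to Y$ is a measurable shift-commuting map $A^{\mathbb{Z}^d}\to B^{\mathbb{Z}^d}$ pushing $\mu=p^{\mathbb{Z}^d}$ to $\nu=q^{\mathbb{Z}^d}$. Its coding radius is $R_\phi(x)=\min\{n\in\mathbb{N}\cup\{\infty\}:\text{for }\mu\text{-a.e. }a,\ a|_{[-n,n]^d}=x|_{[-n,n]^d}\Rightarrow\phi(a)_0=\phi(x)_0\}$; finitary means $R_\phi<\infty$ a.s. Let $*\notin B$; for $n\in\mathbb{N}$ put $\phi^n_0(x)=\phi(x)_0$ if $R_\phi(x)\le n$ and $*$ otherwise (a.e. a function of $x|_{[-n,n]^d}$). For $\mathbb{T}_N^d=\mathbb{Z}^d/(N\mathbb{Z})^d$ and $N\ge2n+1$, define $\hat\phi^n:A^{\mathbb{T}_N^d}\to(B\cup\{*\})^{\mathbb{T}_N^d}$ by letting $\hat\phi^n(\hat x)_u$ be $\phi^n_0$ evaluated at the $N$-periodic extension of $T_{-u}\hat x$, where $(T_{-u}\hat x)_v=\hat x_{v+u}$. With $\hat X\sim p^{\mathbb{T}_N^d}$, $\mathcal{J}^c_{N,n}=\{u\in\mathbb{T}_N^d:\hat\phi^n(\hat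 X)_u=*\}$ (a random set). *)

From HB Require Import structures.
From mathcomp Require Import all_boot all_order all_algebra.
From mathcomp Require Import all_classical all_reals all_analysis.

Set Implicit Arguments.
Unset Strict Implicit.
Unset Printing Implicit Defensive.

Import Order.TTheory GRing.Theory Num.Theory.
Local Open Scope classical_set_scope.
Local Open Scope ring_scope.

(* The point is only needed because measurable types of mathcomp-analysis
   are pointed; its value plays no role (an alphabet carrying a probability
   vector is nonempty anyway). *)
HB.structure Definition FinPointed := {T of Finite T & Pointed T}.
Notation finPointedType := FinPointed.type.

Definition site (d : nat) := 'I_d -> int.

Definition site_add d (u v : site d) : site d := fun i => u i + v i.

Definition origin d : site d := fun _ => 0.

Definition box d (n : nat) : set (site d) :=
  [set v | forall i : 'I_d, (absz (v i) <= n)%N].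

Definition cylinder d (A : Type) (F : set (site d)) (w : site d -> A)
  : set (site d -> A) := [set x | forall v, F v -> x v = w v].

Definition cylinders d (A : finPointedType) : set (set (site d -> A)) :=
  [set C | exists F w, finite_set F /\ C = cylinder F w].

Notation Cfg d A := (g_sigma_algebraType (@cylinders d A)).

Definition shiftm d (A : Type) (u : site d) (x : site d -> A) : site d -> A :=
  fun v => x (site_add v u).

Definition prob_vector (R : realType) (A : finType) (p : A -> R) : Prop :=
  (forall a, 0 <= p a) /\ \sum_(a : A) p a = 1.

(* mu is the product measure p^{Z^d}: the measure of every finite-dimensional
   cylinder is the product of the one-site marginals (this determines the
   measure on the product sigma-algebra). *)
Definition is_product_measure (R : realType) d (A : finPointedType)
    (p : A -> R) (mu : probability (Cfg d A) R) : Prop :=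
  forall (F : set (site d)) (w : site d -> A), finite_set F ->
    mu (cylinder F w) = ((\big[*%R/1%R]_(v \in F) p (w v))%R)%:E.

Definition homomorphism (R : realType) d (A B : finPointedType)
    (mu : probability (Cfg d A) R) (nu : probability (Cfg d B) R)
    (phi : Cfg d A -> Cfg d B) : Prop :=
  [/\ measurable_fun setT phi,
      (forall (u : site d) (x : Cfg d A), phi (shiftm u x) = shiftm u (phi x))
    & (forall S : set (Cfg d B), measurable S -> mu (phi @^-1` S) = nu S)].

Definition codes_within (R : realType) d (A B : finPointedType)
    (mu : probability (Cfg d A) R) (phi : Cfg d A -> Cfg d B)
    (n : nat) (x : Cfg d A) : Prop :=
  {ae mu, forall a : Cfg d A,
     (forall v, box n v -> a v = x v) -> phi a (@origin d) = phi x (@origin d)}.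

(* R_phi(x) = min { n in N u {oo} : ... }  (the infimum of the empty set is +oo) *)
Definition coding_radius (R : realType) d (A B : finPointedType)
    (mu : probability (Cfg d A) R) (phi : Cfg d A -> Cfg d B)
    (x : Cfg d A) : \bar R :=
  ereal_inf [set (n%:R)%:E | n in [set n : nat | codes_within mu phi n x]].

Definition finitary (R : realType) d (A B : finPointedType)
    (mu : probability (Cfg d A) R) (phi : Cfg d A -> Cfg d B) : Prop :=
  {ae mu, forall x, (coding_radius mu phi x < +oo)%E}.

(* phi^n_0 : the symbol * is represented by None *)
Definition phin0 (R : realType) d (A B : finPointedType)
    (mu : probability (Cfg d A) R) (phi : Cfg d A -> Cfg d B)
    (n : nat) (x : Cfg d A) : option B :=
  if `[< (coding_radius mu phi x <= (n%:R)%:E)%E >] then Some (phi x (@origin d))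
  else None.

(* phi^n_0 is a.e. a function of x|_{[-n,n]^d}; this is that function,
   evaluated at (the restriction to [-n,n]^d of) an arbitrary configuration y:
   the value c such that phi^n_0(a) = c for mu-a.e. a agreeing with y on the
   box.  (On cylinders of positive measure c is unique; on null cylinders it
   is an arbitrary choice, which never matters below.) *)
Definition phin0_pat (R : realType) d (A B : finPointedType)
    (mu : probability (Cfg d A) R) (phi : Cfg d A -> Cfg d B)
    (n : nat) (y : site d -> A) : option B :=
  xget None [set c : option B | {ae mu, forall a : Cfg d A,
     (forall v, box n v -> a v = y v) -> phin0 mu phi n a = c}].

Notation torus N d := {ffun 'I_d -> 'I_N}.

Definition tor_of (N d : nat) (v : site d) : option (torus N d) :=
  match N return option (torus N d) with
  | 0 => None
  | N'.+1 => Some [ffun i => inord (absz ((v i) %% (N'.+1)%:Z)%Z)]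
  end.

Definition tshift (N d : nat) (A : Type) (u : torus N d)
    (xh : {ffun torus N d -> A}) : {ffun torus N d -> A} :=
  [ffun v : torus N d => xh (odflt v (tor_of N (fun i : 'I_d => ((v i + u i)%N)%:Z)))].

Definition perext (N d : nat) (A : pointedType) (xh : {ffun torus N d -> A})
  : site d -> A :=
  fun v => odflt point (omap xh (tor_of N v)).

Definition phihat (R : realType) d (A B : finPointedType)
    (mu : probability (Cfg d A) R) (phi : Cfg d A -> Cfg d B)
    (N n : nat) (xh : {ffun torus N d -> A}) (u : torus N d) : option B :=
  phin0_pat mu phi n (perext (tshift u xh)).

Definition Jc (R : realType) d (A B : finPointedType)
    (mu : probability (Cfg d A) R) (phi : Cfg d A -> Cfg d B)
    (N n : nat) (xh : {ffun torus N d -> A}) : {set torus N d} :=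
  [set u | phihat mu phi n xh u == None].

Definition EJc (R : realType) d (A B : finPointedType) (p : A -> R)
    (mu : probability (Cfg d A) R) (phi : Cfg d A -> Cfg d B)
    (N n : nat) : R :=
  \sum_(xh : {ffun torus N d -> A})
     (\prod_(v : torus N d) p (xh v)) * (#|Jc mu phi n xh|)%:R.

(* Let S_n be the set of configurations whose pattern on [-n,n]^d does not
   determine phi^n_0; almost surely R_phi > n on S_n.  When 2n+1 <= N, the
   N-periodic box seen from any torus site is an exact i.i.d. sample, so each
   site is * with probability at most mu(S_n) and E|J^c_{N,n}| <= N^d mu(S_n).
   Since sup_k k^{d/2} 1_{S_k} <= R_phi^{d/2} is integrable, dominated
   convergence gives n^{d/2} mu(S_n) <= t_n with t_n decreasing to 0.  Finally
   take delta_N = 1/(k_N+1) with k_N -> oo so slowly that k_N^{d+1} t_{sqrt N} <= 1: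
   then n = N/(k_N+1) >= sqrt N and N^d mu(S_n) <= 2^d N^{d/2} / (k_N+1). *)

From HB Require Import structures.
From mathcomp Require Import all_boot all_order all_algebra.
From mathcomp Require Import all_classical all_reals all_analysis.
From mathcomp Require Import zify measurable_realfun.

Import Order.TTheory GRing.Theory Num.Theory.
Local Open Scope classical_set_scope.
Local Open Scope ring_scope.

Set Implicit Arguments.
Unset Strict Implicit.
Unset Printing Implicit Defensive.

Section Boxes.
Variable d : nat.

(* The point t of [boxpt m] stands for the site t - m of [box m]. *)
Definition boxpt (m : nat) := {ffun 'I_d -> 'I_(m.*2.+1)}.

Definition site_of_boxpt m (t : boxpt m) : site d := fun i => (t i)%:Z - m%:Z.

Definition boxpt_of_site m (v : site d) : boxpt m :=
  [ffun i => inord (absz (v i + m%:Z))].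

Lemma boxpt_of_siteK m v : box m v -> site_of_boxpt (boxpt_of_site m v) = v.
Proof.
move=> bv; apply: funext => i; rewrite /site_of_boxpt ffunE.
have vi := bv i; rewrite inordK; lia.
Qed.

Lemma box_site_of_boxpt m (t : boxpt m) : box m (site_of_boxpt t).
Proof. by move=> i; rewrite /site_of_boxpt; have := ltn_ord (t i); lia. Qed.

Lemma finite_box m : finite_set (@box d m).
Proof.
suff -> : box m = @site_of_boxpt m @` [set: boxpt m].
  exact/finite_image/finite_finset.
apply/seteqP; split=> [v bv|_ [t _ <-]]; last exact: box_site_of_boxpt.
by exists (boxpt_of_site m v); rewrite ?boxpt_of_siteK.
Qed.

Definition agree_on_box (A : Type) m (a y : site d -> A) :=
  forall v, box m v -> a v = y v.

Lemma agree_on_box_sym (A : Type) m (a y : site d -> A) :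
  agree_on_box m a y -> agree_on_box m y a.
Proof. by move=> h v bv; rewrite h. Qed.

Lemma agree_on_box_trans (A : Type) m (a b c : site d -> A) :
  agree_on_box m a b -> agree_on_box m b c -> agree_on_box m a c.
Proof. by move=> h1 h2 v bv; rewrite h1 // h2. Qed.

Lemma agree_on_box_le (A : Type) m n (a y : site d -> A) : (m <= n)%N ->
  agree_on_box n a y -> agree_on_box m a y.
Proof. by move=> mn h v bv; apply: h => i; apply: leq_trans (bv i) mn. Qed.

Definition box_pattern (A : Type) m (x : site d -> A) : {ffun boxpt m -> A} :=
  [ffun t => x (site_of_boxpt t)].

Definition of_box_pattern (A : Type) m (t : {ffun boxpt m -> A}) : site d -> A :=
  fun v => t (boxpt_of_site m v).

Lemma agree_box_pattern (A : Type) m (x : site d -> A) :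
  agree_on_box m x (of_box_pattern (box_pattern m x)).
Proof. by move=> v bv; rewrite /of_box_pattern ffunE boxpt_of_siteK. Qed.

End Boxes.
Arguments box_pattern {d A} m x.
Arguments agree_box_pattern {d A} m x.

Section CodingRadius.
Variables (R : realType) (d : nat) (A B : finPointedType).
Variables (mu : probability (Cfg d A) R) (phi : Cfg d A -> Cfg d B).

Lemma measurable_cylinder (F : set (site d)) (w : site d -> A) :
  finite_set F -> measurable (cylinder F w : set (Cfg d A)).
Proof. by move=> fF; apply: sub_sigma_algebra; exists F, w. Qed.

Lemma codes_within_mono m n (x : Cfg d A) : (m <= n)%N ->
  codes_within mu phi m x -> codes_within mu phi n x.
Proof. by move=> mn; apply: filterS => a h /(agree_on_box_le mn); apply: h. Qed.

Lemma coding_radius_leP m (x : Cfg d A) :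
  (coding_radius mu phi x <= (m%:R)%:E)%E <-> codes_within mu phi m x.
Proof.
split=> [le_Rm|cm]; last by apply: ereal_inf_lbound; exists m.
apply: contrapT => ncm.
suff : ((m.+1%:R)%:E <= coding_radius mu phi x)%E.
  by move/le_trans/(_ le_Rm); rewrite lee_fin ler_nat ltnn.
apply/ereal_infP => _ [n cn <-]; rewrite lee_fin ler_nat ltnNge.
by apply/negP => nm; apply: ncm; apply: codes_within_mono cn.
Qed.

Lemma phin0_NoneP m (x : Cfg d A) :
  phin0 mu phi m x = None <-> ~ (coding_radius mu phi x <= (m%:R)%:E)%E.
Proof. by rewrite /phin0; case: asboolP. Qed.

Lemma eq_phin0_pat m (y y' : site d -> A) : agree_on_box m y y' ->
  phin0_pat mu phi m y = phin0_pat mu phi m y'.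
Proof.
move=> yy'; rewrite /phin0_pat; congr xget; apply/funext => c; apply/propext.
by split; apply: filterS => a h ay; apply: h => v bv; rewrite ay // ?yy'.
Qed.

(* The pattern value is phi(a0)_0 if some a0 with R_phi(a0) <= m agrees with y
   on the box, and * otherwise. *)
Lemma phin0_patE m (y : site d -> A) :
  {ae mu, forall a : Cfg d A, agree_on_box m a y ->
     phin0 mu phi m a = phin0_pat mu phi m y}.
Proof.
rewrite /phin0_pat; set P := [set c | _].
suff : exists c, P c by move/(xgetPex None).
have [[a0 [a0y le_a0]]|no_a0] := pselect (exists a0 : Cfg d A,
  agree_on_box m a0 y /\ (coding_radius mu phi a0 <= (m%:R)%:E)%E).
- exists (Some (phi a0 (@origin d))).
  have ca0 := (coding_radius_leP m a0).1 le_a0.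
  apply: filterS (ca0) => a h ay.
  have aa0 : agree_on_box m a a0 by apply: agree_on_box_trans ay (agree_on_box_sym a0y).
  have phia := h aa0; rewrite /phin0; case: asboolP => [_|nle]; first by rewrite phia.
  exfalso; apply/nle/coding_radius_leP; apply: filterS ca0 => a' h' a'a.
  by rewrite h' ?phia //; apply: agree_on_box_trans a'a aa0.
- exists None; apply: nearW => a ay.
  by apply/phin0_NoneP => le_a; apply: no_a0; exists a.
Qed.

Definition undetermined m : set (Cfg d A) :=
  [set x | phin0_pat mu phi m x = None].

Lemma undetermined_coding_radius :
  {ae mu, forall (x : Cfg d A) m, undetermined m x ->
     ((m%:R)%:E < coding_radius mu phi x)%E}.
Proof.
apply: ae_foralln => m.
have h : forall t : {ffun boxpt d m -> A}, {ae mu, forall a : Cfg d A,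
    agree_on_box m a (of_box_pattern t) ->
    phin0_pat mu phi m (of_box_pattern t) = None -> phin0 mu phi m a = None}.
  by move=> t; apply: filterS (phin0_patE m (of_box_pattern t)) => a h ay <-; rewrite h.
apply: filterS (filter_forall _ h) => a H Sa; rewrite ltNge; apply/negP.
apply/phin0_NoneP; apply: (H (box_pattern m a)); first exact: agree_box_pattern.
by rewrite -(eq_phin0_pat (agree_box_pattern m a)).
Qed.

Lemma measurable_undetermined m : measurable (undetermined m).
Proof.
suff -> : undetermined m = \bigcup_(t in [set t : {ffun boxpt d m -> A} |
     phin0_pat mu phi m (of_box_pattern t) = None]) cylinder (box m) (of_box_pattern t).
  apply: fin_bigcup_measurable; first exact: finite_finset.
  by move=> t _; apply: measurable_cylinder; apply: finite_box.
apply/seteqP; split => [x Sx|x [t /= St xt]].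
  exists (box_pattern m x); last exact: agree_box_pattern.
  by rewrite /= -(eq_phin0_pat (agree_box_pattern m x)).
by rewrite /undetermined /= -St; apply: eq_phin0_pat.
Qed.

End CodingRadius.

Lemma fsbig_finType (V : Type) (idx : V) (op : Monoid.com_law idx)
    (T : finType) (D : set T) (F : T -> V) :
  \big[op/idx]_(t \in D) F t = \big[op/idx]_(t | `[< D t >]) F t.
Proof.
rewrite fsbig_mkcond (fsbigE (enum T)) ?enum_uniq //; last first.
  by move=> t _; rewrite mem_enum.
rewrite big_enum_cond /= [RHS]big_mkcond; apply: eq_big => [t|t _].
  exact: mem_set.
by rewrite /patch.
Qed.

Definition centred_mod (K n : nat) (r : int) : int :=
  let s := (r %% K%:Z)%Z in if s <= n%:Z then s else s - K%:Z.

Lemma centred_modE K n r : (centred_mod K n r = r %[mod K%:Z])%Z.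
Proof.
rewrite /centred_mod; case: ifP => _; first by rewrite modz_mod.
by rewrite -mulN1r addrC modzMDl modz_mod.
Qed.

Lemma eq_centred_mod K n r1 r2 : (r1 = r2 %[mod K%:Z])%Z ->
  centred_mod K n r1 = centred_mod K n r2.
Proof. by rewrite /centred_mod => ->. Qed.

Lemma centred_mod_id K n (v : int) : (n.*2.+1 <= K)%N -> (absz v <= n)%N ->
  centred_mod K n v = v.
Proof.
move=> nK vn; rewrite /centred_mod.
have [v0|v0] := lerP 0 v.
  by rewrite modz_small; [case: ifP => //; lia | lia].
rewrite -(modzDr v K%:Z) modz_small; [case: ifP => //; lia | lia].
Qed.

Lemma absz_modz_lt (K : nat) (v : int) : (0 < K)%N -> (absz (v %% K%:Z)%Z < K)%N.
Proof.
move=> K0; have K0' : 0 < K%:Z by rewrite ltz_nat.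
by have := ltz_pmod v K0'; have := modz_ge0 v (lt0r_neq0 K0'); lia.
Qed.

Section TorusWindow.
Variables (d N n : nat) (u : torus N.+1 d).

(* The representative in the window (n - N - 1, n]^d of the torus point t - u. *)
Definition window_site (t : torus N.+1 d) : site d :=
  fun i => centred_mod N.+1 n ((t i)%:Z - (u i)%:Z).

Definition window_point (v : site d) : torus N.+1 d :=
  [ffun i => inord (absz ((v i + (u i)%:Z) %% (N.+1)%:Z)%Z)].

Lemma window_siteK : cancel window_site window_point.
Proof.
move=> t; apply/ffunP => i; rewrite ffunE; apply/val_inj => /=.
rewrite /window_site -modzDml centred_modE modzDml subrK modz_small.
  by rewrite absz_nat inordK.
by rewrite ltz_nat ltn_ord.
Qed.

Lemma window_site_inj : injective window_site.
Proof. exact: can_inj window_siteK. Qed.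

Definition window_sample (A : Type) (x : site d -> A) : {ffun torus N.+1 d -> A} :=
  [ffun t => x (window_site t)].

(* The window contains [-n,n]^d because 2n+1 <= N+1. *)
Lemma agree_perext_window_sample (A : pointedType) (x : site d -> A) :
  (n.*2.+1 <= N.+1)%N -> agree_on_box n x (perext (tshift u (window_sample x))).
Proof.
move=> nN v bv; rewrite /perext /= /tshift ffunE /= /window_sample ffunE; congr x.
apply: funext => i; rewrite /window_site !ffunE /= !inordK ?absz_modz_lt //.
rewrite -[LHS](centred_mod_id nN (bv i)); apply: eq_centred_mod.
have modzK (r : int) : (absz (r %% (N.+1)%:Z)%Z)%:Z = (r %% (N.+1)%:Z)%Z.
  by rewrite gez0_abs // modz_ge0.
by rewrite PoszD !modzK modzDml addrK modz_mod.
Qed.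

End TorusWindow.

Section TorusSample.
Variables (R : realType) (d : nat) (A B : finPointedType) (p : A -> R).
Variables (mu : probability (Cfg d A) R) (phi : Cfg d A -> Cfg d B).
Hypothesis mu_prod : is_product_measure p mu.
Variables (N n : nat) (u : torus N.+1 d).

Local Notation sample := (@window_sample d N n u A).

Lemma window_sample_cylinder xh : [set x : Cfg d A | sample x = xh] =
  cylinder (range (window_site n u)) (fun v => xh (window_point u v)).
Proof.
apply/seteqP; split => x /=.
  by move=> <- _ [t _ <-]; rewrite window_siteK ffunE.
move=> xh_x; apply/ffunP => t; rewrite ffunE xh_x ?window_siteK //; exists t.
Qed.

Lemma measurable_window_sample xh : measurable [set x : Cfg d A | sample x = xh].
Proof.
rewrite window_sample_cylinder; apply: measurable_cylinder.
exact/finite_image/finite_finset.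
Qed.

Lemma mu_window_sample xh :
  mu [set x : Cfg d A | sample x = xh] = (\prod_(t : torus N.+1 d) p (xh t))%:E.
Proof.
rewrite window_sample_cylinder mu_prod; last exact/finite_image/finite_finset.
rewrite fsbig_image; last by move=> a b _ _; apply: window_site_inj.
rewrite fsbig_finType; congr EFin; apply: eq_big => t; first exact/asboolT.
by rewrite window_siteK.
Qed.

Lemma window_sample_law_le (E : pred {ffun torus N.+1 d -> A}) (S : set (Cfg d A)) :
  measurable S -> (forall x, E (sample x) -> S x) ->
  ((\sum_(xh | E xh) \prod_(t : torus N.+1 d) p (xh t))%:E <= mu S)%E.
Proof.
move=> mS ES.
have disj : trivIset [set xh | E xh] (fun xh => [set x : Cfg d A | sample x = xh]).
  by move=> xh xh' _ _ [x [/= <- <-]].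
rewrite -sumEFin.
have -> : (\sum_(xh | E xh) (\prod_(t : torus N.+1 d) p (xh t))%:E)%E =
    (\sum_(xh \in [set xh | E xh]) mu [set x : Cfg d A | sample x = xh])%E.
  rewrite fsbig_finType; apply: eq_big => xh; first by rewrite /= asboolb.
  by rewrite mu_window_sample.
rewrite -(measure_fin_bigcup mu finite_finset disj); last first.
  by move=> xh _; apply: measurable_window_sample.
apply: le_measure; rewrite ?inE //.
  apply: fin_bigcup_measurable; first exact: finite_finset.
  by move=> xh _; apply: measurable_window_sample.
by move=> x [xh /= Exh xh_x]; apply: ES; rewrite xh_x.
Qed.

Lemma Jc_site_le : (n.*2.+1 <= N.+1)%N ->
  \sum_(xh : {ffun torus N.+1 d -> A})
     (\prod_(t : torus N.+1 d) p (xh t)) * (u \in Jc mu phi n xh)%:R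
   <= fine (mu (undetermined mu phi n)).
Proof.
move=> nN; rewrite -lee_fin fineK; last first.
  by apply: fin_num_measure; apply: measurable_undetermined.
rewrite (eq_bigr (fun xh => if u \in Jc mu phi n xh then \prod_t p (xh t) else 0)).
  2: by move=> xh _; case: (u \in _); rewrite ?mulr1 ?mulr0.
rewrite -big_mkcond /=; apply: window_sample_law_le; first exact: measurable_undetermined.
move=> x; rewrite /Jc inE => /eqP Jx.
by rewrite /undetermined /= (eq_phin0_pat mu phi (agree_perext_window_sample u x nN)).
Qed.

End TorusSample.

Lemma EJc_le (R : realType) d (A B : finPointedType) (p : A -> R)
    (mu : probability (Cfg d A) R) (phi : Cfg d A -> Cfg d B) N n :
  is_product_measure p mu -> (n.*2.+1 <= N)%N ->
  EJc p mu phi N n <= N%:R ^+ d * fine (mu (undetermined mu phi n)).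
Proof.
case: N => [//|N] mu_prod nN; rewrite /EJc.
have card_Jc xh :
    (#|Jc mu phi n xh|)%:R = \sum_(u : torus N.+1 d) (u \in Jc mu phi n xh)%:R :> R.
  rewrite -sum1_card natr_sum big_mkcond /=.
  by apply: eq_bigr => u _; case: (u \in _).
under eq_bigr do rewrite card_Jc mulr_sumr.
rewrite exchange_big /=.
apply: (@le_trans _ _ (\sum_(u : torus N.+1 d) fine (mu (undetermined mu phi n)))).
  by apply: ler_sum => u _; apply: Jc_site_le.
by rewrite sumr_const card_ffun !card_ord -[X in X <= _]mulr_natl natrX.
Qed.

Section NonmeasurableIntegral.
Context (dm : measure_display) (T : measurableType dm) (R : realType).
Variable mu : {measure set T -> \bar R}.

(* The integral of a nonnegative function is a supremum over the simple
   functions below it, so it is monotone without any measurability. *)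
Lemma ge0_le_integral_nonmeas (f g : T -> \bar R) :
  (forall x, (0 <= f x)%E) -> (forall x, (f x <= g x)%E) ->
  (\int[mu]_x f x <= \int[mu]_x g x)%E.
Proof.
move=> f0 fg; have g0 x : (0 <= g x)%E by apply: le_trans (f0 x) (fg x).
rewrite !ge0_integralTE //; apply: ereal_sup_le => _ [h hf <-].
by exists h => // x; apply: le_trans (hf x) (fg x).
Qed.

Lemma ae_ge0_le_integral_nonmeas (f g : T -> \bar R) :
  measurable_fun setT f -> (forall x, (0 <= f x)%E) -> (forall x, (0 <= g x)%E) ->
  {ae mu, forall x, (f x <= g x)%E} ->
  (\int[mu]_x f x <= \int[mu]_x g x)%E.
Proof.
move=> mf f0 g0 [M [mM M0 fgM]].
rewrite (ge0_negligible_integral mM measurableT mf (fun x _ => f0 x) M0).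
rewrite integral_mkcond.
apply: ge0_le_integral_nonmeas => x; rewrite /patch; case: ifPn => // /set_mem [_ Mx].
by apply: contrapT => nfg; apply/Mx/fgM.
Qed.

End NonmeasurableIntegral.

Section WeightedTail.
Context (dm : measure_display) (T : measurableType dm) (R : realType).
Variable mu : {finite_measure set T -> \bar R}.
Variables (S : nat -> set T) (w : nat -> R).
Hypotheses (mS : forall k, measurable (S k)) (w_ge0 : forall k, 0 <= w k).
Hypothesis S_eventually_not : {ae mu, forall x, \forall k \near \oo, ~ S k x}.

Let G x := esups (fun k => (w k * \1_(S k) x)%:E) 0.
Hypothesis G_integrable : (\int[mu]_x G x < +oo)%E.

(* The bound is t m = int_{U m} G, and U m decreases to a null set. *)
Let U m := \bigcup_(k in [set k | (m <= k)%N]) S k.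
Let g m x := ((\1_(U m) x)%:E * G x)%E.

Let G_ge0 x : (0 <= G x)%E.
Proof.
apply: le_trans (ereal_sup_ubound _) => /=; last by exists 0%N.
by rewrite lee_fin mulr_ge0 // indicE.
Qed.

Let G_ge_weight k x : S k x -> ((w k)%:E <= G x)%E.
Proof.
move=> Skx; apply: ereal_sup_ubound; exists k => //=.
by rewrite indicE mem_set // mulr1.
Qed.

Let measurable_G : measurable_fun setT G.
Proof.
apply: measurable_fun_esups => k; apply/measurable_EFinP.
by apply: measurable_funM; [exact: measurable_cst | exact: measurable_indic].
Qed.

Let measurable_U m : measurable (U m).
Proof. by apply: bigcup_measurable => k _. Qed.

Let measurable_g m : measurable_fun setT (g m).
Proof.
apply: emeasurable_funM => //.
by apply/measurable_EFinP; apply: measurable_indic.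
Qed.

Let g_ge0 m x : (0 <= g m x)%E.
Proof. by rewrite /g indicE; case: (_ \in _); rewrite ?mul1e ?mul0e. Qed.

Let g_le_G m x : (g m x <= G x)%E.
Proof. by rewrite /g indicE; case: (_ \in _); rewrite ?mul1e ?mul0e. Qed.

Let integral_g_cvg0 : (fun m => \int[mu]_x g m x)%E @ \oo --> 0%E.
Proof.
have G_int : mu.-integrable setT G.
  apply/integrableP; split => //.
  by under eq_integral do rewrite gee0_abs //.
have g_cvg : {ae mu, forall x, setT x -> g^~ x @ \oo --> (cst 0%E) x}.
  apply: filterS S_eventually_not => x [k0 _ nS] _; apply: cvg_near_cst.
  exists k0 => // m /= k0m; rewrite /g indicE memNset ?mul0e //.
  by case=> k /= mk; apply: nS; apply: leq_trans mk.
have g_dom : {ae mu, forall x n, setT x -> (`|g n x| <= G x)%E}.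
  by apply: aeW => x n _; rewrite gee0_abs.
have [_ _] := dominated_convergence measurableT measurable_g (measurable_cst _)
  g_cvg G_int g_dom.
by rewrite integral0.
Qed.

Let integral_g_fin m : (\int[mu]_x g m x)%E \is a fin_num.
Proof.
rewrite ge0_fin_numE; last exact: integral_ge0.
by apply: le_lt_trans G_integrable; apply: ge0_le_integral.
Qed.

Lemma weighted_tail_bound : exists t : nat -> R,
  [/\ {homo t : m n / (m <= n)%N >-> n <= m}, t @ \oo --> 0
    & forall n, w n * fine (mu (S n)) <= t n].
Proof.
exists (fun m => fine (\int[mu]_x g m x)%E); split.
- move=> m n mn; rewrite fine_le ?integral_g_fin //.
  apply: ge0_le_integral => // x _; apply: lee_wpmul2r; first exact: G_ge0.
  rewrite lee_fin !indicE; case: (boolP (x \in U n)) => // /set_mem [k /= nk Skx].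
  by rewrite mem_set //; exists k => //=; apply: leq_trans mn nk.
- by have /fine_cvgP[] := integral_g_cvg0.
move=> n; rewrite -lee_fin fineK ?integral_g_fin // EFinM fineK ?fin_num_measure //.
rewrite -(setIT (S n)) -integral_indic // -ge0_integralZl_EFin //; last first.
  exact/measurable_EFinP/measurable_indic.
apply: ge0_le_integral => //.
- by move=> x _; rewrite mule_ge0 // lee_fin.
- apply: emeasurable_funM; first exact: measurable_cst.
  exact/measurable_EFinP/measurable_indic.
move=> x _; rewrite /g !indicE; case: (boolP (x \in S n)) => [/set_mem Snx|_] /=.
  have Unx : U n x by exists n => /=.
  by rewrite mem_set // mule1 mul1e; exact: G_ge_weight.
by rewrite mule0 mule_ge0 // lee_fin.
Qed.

End WeightedTail.

Definition isqrt (N : nat) : nat := \max_(j < N.+1 | (j * j <= N)%N) j.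

Lemma isqrt_ge j N : (j * j <= N)%N -> (j <= isqrt N)%N.
Proof.
move=> jjN; have jN : (j < N.+1)%N by rewrite ltnS; apply: leq_trans jjN; nia.
exact: (@leq_bigmax_cond _ (fun i : 'I_N.+1 => (i * i <= N)%N) val (Ordinal jN)).
Qed.

Lemma isqrt_sq N : (isqrt N * isqrt N <= N)%N.
Proof.
rewrite /isqrt; elim/big_ind: _ => // x y.
by rewrite /maxn; case: ifP.
Qed.

Lemma isqrt_homo : {homo isqrt : m n / (m <= n)%N}.
Proof. by move=> m n mn; apply: isqrt_ge; apply: leq_trans (isqrt_sq m) mn. Qed.

Lemma isqrt_ge_near K : \forall N \near \oo, (K <= isqrt N)%N.
Proof. by exists (K * K)%N => // N /= /isqrt_ge. Qed.

Lemma divn_scale_bounds N K : (2 < K)%N -> (K * K <= N)%N ->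
  let n := (N %/ K)%N in
  [/\ (isqrt N <= n)%N, (0 < n)%N, (n.*2.+1 <= N)%N & (N <= K.*2 * n)%N].
Proof.
move=> K2 KKN n.
have nKN : (n * K <= N)%N by apply: leq_trunc_div.
have NnK : (N < n.+1 * K)%N by apply: ltn_ceil; lia.
have Kn : (K <= n)%N by rewrite leq_divRL //; lia.
split => //; [|lia|nia|nia].
rewrite leq_divRL; last lia.
have [sK|Ks] := leqP (isqrt N) K.
  by apply: leq_trans KKN; rewrite leq_mul2r sK orbT.
by apply: leq_trans (isqrt_sq N); rewrite leq_mul2l (ltnW Ks) orbT.
Qed.

Lemma absz_floor_divn (R : realType) (N K : nat) : (0 < K)%N ->
  absz (Num.floor ((K%:R)^-1 * N%:R : R)) = (N %/ K)%N.
Proof.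
move=> K0; rewrite (@floor_def _ _ (N %/ K)%:Z) //.
have -> : ((N %/ K)%:Z + 1)%R = ((N %/ K).+1)%:Z by rewrite -addn1 PoszD.
rewrite -!pmulrn.
rewrite ler_pdivlMl ?ltr0n // ltr_pdivrMl ?ltr0n // -!natrM ler_nat ltr_nat.
by rewrite mulnC leq_trunc_div /= mulnC ltn_ceil.
Qed.

Section PowHalf.
Variables (R : realType) (d : nat).

Definition pow_half (n : nat) : R := n%:R `^ (d%:R / 2).

Lemma pow_half_ge0 n : 0 <= pow_half n.
Proof. exact: powR_ge0. Qed.

Lemma pow_halfM m n : pow_half (m * n) = pow_half m * pow_half n.
Proof. by rewrite /pow_half natrM powRM. Qed.

Lemma pow_half_homo : {homo pow_half : m n / (m <= n)%N >-> m <= n}.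
Proof. by move=> m n mn; apply: ge0_ler_powR; rewrite ?nnegrE ?ler_nat. Qed.

Lemma pow_half_sq N : pow_half N * pow_half N = N%:R ^+ d.
Proof.
rewrite -expr2 -powR_mulrn ?powR_ge0 // -powRrM -powR_mulrn //.
by congr (_ `^ _); rewrite divfK.
Qed.

Lemma pow_half_le_expn n : (0 < n)%N -> pow_half n <= n%:R ^+ d.
Proof.
move=> n0; rewrite -powR_mulrn // /pow_half; apply: ler_powR; first by rewrite ler1n.
by rewrite ler_pdivrMr // ler_peMr // ler1n.
Qed.

Lemma pow_half_le_poweR k (x : \bar R) :
  ((k%:R)%:E <= x)%E -> ((pow_half k)%:E <= x `^ (d%:R / 2))%E.
Proof.
move=> kx; rewrite -poweR_EFin; apply: gt0_ler_poweR => //.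
- by rewrite in_itv /= lee_fin ler0n leey.
- by rewrite in_itv /= leey (le_trans _ kx) // lee_fin.
Qed.

(* N^d a = N^{d/2} N^{d/2} a, and N^{d/2} a <= (2K)^{d/2} n^{d/2} a
   <= 2^d K^d e <= 2^d / K. *)
Lemma rescaled_tail_bound N n K (a e : R) : (0 < K)%N -> (0 < n)%N -> (N <= K.*2 * n)%N ->
  0 <= a -> pow_half n * a <= e -> K%:R ^+ d.+1 * e <= 1 ->
  N%:R ^+ d * a <= (2%:R ^+ d / K%:R) * pow_half N.
Proof.
move=> K0 n0 NKn a0 na_e Ke.
have e0 : 0 <= e by apply: le_trans na_e; rewrite mulr_ge0 ?pow_half_ge0.
rewrite -pow_half_sq -mulrA [X in _ <= X]mulrC.
apply: ler_wpM2l; first exact: pow_half_ge0.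
apply: (@le_trans _ _ (pow_half K.*2 * (pow_half n * a))).
  by rewrite mulrA -pow_halfM; apply: ler_wpM2r => //; apply: pow_half_homo.
apply: (@le_trans _ _ (K.*2%:R ^+ d * e)).
  apply: ler_pM => //; rewrite ?mulr_ge0 ?pow_half_ge0 //.
  by apply: pow_half_le_expn; rewrite double_gt0.
rewrite -muln2 natrM exprMn [_ ^+ d * 2 ^+ d]mulrC -mulrA.
apply: ler_wpM2l; first by rewrite exprn_ge0.
by rewrite -[X in _ <= X]div1r ler_pdivlMr ?ltr0n // mulrAC -exprSr.
Qed.

End PowHalf.

Section SlowIndex.
Variables (R : realType) (r : nat) (e : nat -> R).
Hypothesis e_homo : {homo e : m n / (m <= n)%N >-> n <= m}.
Hypothesis e_small : forall c, 0 < c -> \forall N \near \oo, e N <= c.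

Let admissible N j := ((j.+1 * j.+1 <= N)%N && (j.+1%:R ^+ r * e N <= 1)).

Let k N := \max_(j < N | admissible N j) j.

Let k_ge N j : admissible N j -> (j <= k N)%N.
Proof.
move=> adm; have jN : (j < N)%N by case/andP: adm => jjN _; apply: leq_trans jjN; nia.
exact: (@leq_bigmax_cond _ (fun i : 'I_N => admissible N i) val (Ordinal jN)).
Qed.

Let k_spec N : k N = 0%N \/ admissible N (k N).
Proof.
rewrite /k; elim/big_ind: _ => [|x y|j]; [by left| |by right].
by rewrite /maxn; case: ifP.
Qed.

Lemma slow_index : exists k : nat -> nat,
  [/\ {homo k : m n / (m <= n)%N}, forall K, \forall N \near \oo, (K <= k N)%N
    & forall N, (0 < k N)%N ->
        ((k N).+1 * (k N).+1 <= N)%N /\ (k N).+1%:R ^+ r * e N <= 1].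
Proof.
exists k; split.
- move=> m n mn; have [->//|/andP[km ekm]] := k_spec m.
  apply/k_ge/andP; split; first exact: leq_trans km mn.
  by apply: le_trans ekm; apply/ler_wpM2l/e_homo; rewrite ?exprn_ge0.
- move=> K; have Kr0 : 0 < (K.+1%:R ^+ r : R)^-1 by rewrite invr_gt0 exprn_gt0.
  have [n0 _ en0] := e_small Kr0.
  exists (maxn n0 (K.+1 * K.+1)) => // N /=; rewrite geq_max => /andP[n0N KN].
  apply/k_ge/andP; split => //.
  have KrK : 0 < (K.+1%:R ^+ r : R) by rewrite exprn_gt0.
  by have := en0 N n0N; rewrite -(ler_pM2l KrK) mulrV ?unitfE ?gt_eqF.
- by move=> N k0; case: (k_spec N) => [kN0|/andP[]//]; rewrite kN0 in k0.
Qed.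

End SlowIndex.

Section VanishingScale.
Variables (R : realType) (d : nat) (t a : nat -> R) (E : nat -> nat -> R).
Hypotheses (t_homo : {homo t : m n / (m <= n)%N >-> n <= m}) (t_cvg : t @ \oo --> 0).
Hypotheses (a_ge0 : forall n, 0 <= a n) (a_tail : forall n, pow_half R d n * a n <= t n).
Hypothesis E_le : forall N n, (n.*2.+1 <= N)%N -> E N n <= N%:R ^+ d * a n.

Lemma E_divn_le N K : (2 < K)%N -> (K * K <= N)%N ->
  K%:R ^+ d.+1 * t (isqrt N) <= 1 ->
  E N (N %/ K) <= (2%:R ^+ d / K%:R) * pow_half R d N.
Proof.
move=> K2 KKN Kt; have [sn n0 nN NKn] := divn_scale_bounds K2 KKN.
apply: le_trans (E_le nN) _.
apply: rescaled_tail_bound n0 NKn (a_ge0 _) _ Kt; first exact: ltnW (ltnW K2).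
by apply: le_trans (a_tail _) _; apply: t_homo.
Qed.

Lemma vanishing_scale : exists delta : nat -> R,
  [/\ {homo delta : m n / (m <= n)%N >-> n <= m}, delta @ \oo --> 0
    & forall eps : R, 0 < eps -> \forall N \near \oo,
        E N (absz (Num.floor (delta N * N%:R))) <= eps * pow_half R d N].
Proof.
(* n = N %/ (k N).+1 will be at least isqrt N, so that t n <= e N. *)
pose e N := t (isqrt N).
have e_homo : {homo e : m n / (m <= n)%N >-> n <= m}.
  by move=> m n mn; apply/t_homo/isqrt_homo.
have e_small c : 0 < c -> \forall N \near \oo, e N <= c.
  move=> c0; have [n0 _ tn0] := (cvgrPdist_lt _ _).1 t_cvg c c0.
  apply: filterS (isqrt_ge_near n0) => N /tn0 /=; rewrite sub0r normrN => /ltW.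
  exact: le_trans (ler_norm _).
have [k [k_homo k_inf k_adm]] := slow_index d.+1 e_homo e_small.
exists (fun N => (k N).+1%:R^-1); split.
- by move=> m n mn; rewrite lef_pV2 ?posrE // ler_nat ltnS k_homo.
- apply/cvgrPdist_lt => c c0.
  have [K cK] : exists K : nat, c^-1 < K%:R.
    by have /filter_ex := nbhs_infty_gtr c^-1.
  apply: filterS (k_inf K) => N KkN.
  rewrite sub0r normrN ger0_norm ?invr_ge0 // -[c]invrK ltf_pV2 ?posrE ?invr_gt0 //.
  by apply: lt_le_trans cK _; rewrite ler_nat; apply: leq_trans KkN _.
move=> eps eps0.
have [K0 K0eps] : exists K0 : nat, 2%:R ^+ d / eps < K0%:R.
  by have /filter_ex := nbhs_infty_gtr (2%:R ^+ d / eps).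
apply: filterS (k_inf (maxn 2 K0)) => N; rewrite geq_max => /andP[k2 kK0].
have [kkN kt] := k_adm N (ltnW k2).
rewrite absz_floor_divn //; apply: le_trans (E_divn_le _ kkN kt) _ => //.
apply: ler_wpM2r; first exact: pow_half_ge0.
rewrite ler_pdivrMr ?ltr0n // mulrC -ler_pdivrMr //.
by apply/ltW/(lt_le_trans K0eps); rewrite ler_nat; apply: leq_trans kK0 _.
Qed.

End VanishingScale.

Lemma undetermined_tail (R : realType) d (A B : finPointedType)
    (mu : probability (Cfg d A) R) (phi : Cfg d A -> Cfg d B) :
  finitary mu phi ->
  (\int[mu]_x ((coding_radius mu phi x) `^ (d%:R / 2))%E < +oo)%E ->
  exists t : nat -> R,
    [/\ {homo t : m n / (m <= n)%N >-> n <= m}, t @ \oo --> 0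
      & forall n, pow_half R d n * fine (mu (undetermined mu phi n)) <= t n].
Proof.
move=> fin_phi int_R; apply: weighted_tail_bound.
- exact: measurable_undetermined.
- exact: pow_half_ge0.
- apply: filterS2 (undetermined_coding_radius mu phi) fin_phi => x xR finR.
  have R0 : (0 <= coding_radius mu phi x)%E.
    by apply/ereal_infP => _ [n _ <-]; rewrite lee_fin.
  have Rfin : coding_radius mu phi x \is a fin_num by rewrite ge0_fin_numE.
  apply: filterS (nbhs_infty_ger (fine (coding_radius mu phi x))) => k Rk /xR.
  by rewrite -(fineK Rfin) lte_fin ltNge Rk.
- apply: le_lt_trans int_R; apply: ae_ge0_le_integral_nonmeas => //.
  + apply: measurable_fun_esups => k; apply/measurable_EFinP.
    apply: measurable_funM; first exact: measurable_cst.
    by apply: measurable_indic; apply: measurable_undetermined.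
  + move=> x; apply: le_trans (ereal_sup_ubound _) => /=; last by exists 0%N.
    by rewrite lee_fin mulr_ge0 ?pow_half_ge0 // indicE.
  + by move=> x; apply: poweR_ge0.
  apply: filterS (undetermined_coding_radius mu phi) => x xR.
  apply: ge_ereal_sup => _ [k _ <-]; rewrite indicE.
  case: (boolP (x \in undetermined mu phi k)) => [/set_mem/xR/ltW kR|_].
    by rewrite mulr1; apply: pow_half_le_poweR.
  by rewrite mulr0 poweR_ge0.
Qed.

Theorem corollary7 (R : realType) (d : nat) (A B : finPointedType)
    (p : A -> R) (q : B -> R)
    (mu : probability (Cfg d A) R) (nu : probability (Cfg d B) R)
    (phi : Cfg d A -> Cfg d B) :
  prob_vector p -> prob_vector q ->
  is_product_measure p mu -> is_product_measure q nu ->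
  homomorphism mu nu phi ->
  finitary mu phi ->
  (\int[mu]_x ((coding_radius mu phi x) `^ (d%:R / 2))%E < +oo)%E ->
  exists delta : nat -> R,
    [/\ {homo delta : m n / (m <= n)%N >-> n <= m},
        delta @ \oo --> 0
      & forall eps : R, 0 < eps ->
          \forall N \near \oo,
            EJc p mu phi N (absz (Num.floor (delta N * N%:R)))
              <= eps * (N%:R `^ (d%:R / 2))].
Proof.
move=> _ _ mu_prod _ _ fin_phi int_R.
have [t [t_homo t_cvg t_tail]] := undetermined_tail fin_phi int_R.
apply: (vanishing_scale t_homo t_cvg _ t_tail) => [n|N n nN].
- exact/fine_ge0/measure_ge0.
- exact: EJc_le.
Qed.
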